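(* Let $n\neq 0,-1$ be an integer and $M$ the graph manifold obtained by $4$-surgery along the $n$-twist knot $K_n$, decomposed along an incompressible torus as $M=E_{T(2,2n+1)}\cup N(Kb)$. Then for every irreducible representation $\bar\rho:\pi_1(M)\to SL(2,\mathbb{C})$, the restriction of $\bar\rho$ to $\pi_1(E_{T(2,2n+1)})$ is abelian.
   Context: The $n$-twist knot $K_n$ is the two-bridge knot whose group has the presentation $\pi_1(E_{K_n})=\langle \alpha,\beta\mid \omega^n\alpha=\beta\omega^n\rangle$ with $\alpha,\beta$ meridians and $\omega=\beta\alpha^{-1}\beta^{-1}\alpha$; its Alexander polynomial is $-nt^2+(2n+1)t-n$, and $K_1$ is the figure-eight knot. $E_K$ denotes a knot exterior, $T(2,2n+1)$ the torus knot of type $(2,2n+1)$, and $N(Kb)$ the twisted $I$-bundle over the Klein bottle. The manifold $M$ obtained by $4$-surgery along $K_n$ is the union of $E_{T(2,2n+1)}$ and $N(Kb)$ along a torus, with $\pi_1(M)=\langle a,b,x,y\mid a^2=b^{2n+1},\ x^{-1}yx=y^{-1},\ \mu=y^{-1},\ h=y^{-1}x^2\rangle$, where $\pi_1(E_{T(2,2n+1)})=\langle a,b\mid a^2=b^{2n+1}\rangle$, $\pi_1(N(Kb))=\langle x,y\mid x^{-1}yx=y^{-1}\rangle$, $\mu=b^{-n}a$ is a meridian and $h$ a regular fiber of the torus knot exterior. A representation is irreducible if the only subspaces of $\mathbb{C}^2$ invariant under its image are $\{0\}$ and $\mathbb{C}^2$; abelian if its image is abelian. *)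

From mathcomp Require Import all_boot all_order all_algebra.
From mathcomp Require Import complex Rstruct.
From Stdlib Require Import Reals.
Set Implicit Arguments. Unset Strict Implicit. Unset Printing Implicit Defensive.
Import GRing.Theory Num.Theory.
Local Open Scope ring_scope.

Definition CC : fieldType := (Rdefinitions.R)[i].

Inductive generated {F : fieldType} (S : seq 'M[F]_2) : 'M[F]_2 -> Prop :=
| gen_one : generated S 1
| gen_in g : g \in S -> generated S g
| gen_inv g : generated S g -> generated S g^-1
| gen_mul g h : generated S g -> generated S h -> generated S (g * h).

(* Irreducibility: the only subspaces of F^2 (column vectors, acted on by
   v |-> g v) invariant under every element of the image are {0} and F^2.
   A subspace is represented as the row space of U; g maps it to the row
   space of U *m g^T. *)
Definition irreducible_image {F : fieldType} (S : seq 'M[F]_2) : Prop :=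
  forall U : 'M[F]_2,
    (forall g, generated S g -> (U *m g^T <= U)%MS) ->
    (U == (0 : 'M[F]_2))%MS \/ (U == (1%:M : 'M[F]_2))%MS.

Definition abelian_image {F : fieldType} (S : seq 'M[F]_2) : Prop :=
  forall g h, generated S g -> generated S h -> g * h = h * g.

(* A representation rho : pi_1(M) -> SL(2,C) of
   <a,b,x,y | a^2 = b^(2n+1), x^-1 y x = y^-1, mu = y^-1, h = y^-1 x^2>
   with mu = b^-n a and h = a^2, given by the images A,B,X,Y of a,b,x,y. *)
Definition rep_M (n : int) (A B X Y : 'M[CC]_2) : Prop :=
  [/\ \det A = 1, \det B = 1, \det X = 1 & \det Y = 1] /\
  [/\ A ^+ 2 = B ^ (2 * n + 1),
      X^-1 * Y * X = Y^-1,
      B ^ (- n) * A = Y^-1 &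
      A ^+ 2 = Y^-1 * X ^+ 2].

From mathcomp Require Import all_boot all_order all_algebra.
From mathcomp Require Import complex Rstruct.
From mathcomp Require Import ring.
Import GRing.Theory Num.Theory.
Local Open Scope ring_scope.
Set Implicit Arguments. Unset Strict Implicit.

(* Everything turns on the image of the fiber h = a^2 = b^(2n+1). If it is not
   scalar, rho(a) and rho(b) lie in its centralizer, which is commutative: a
   matrix commuting with a non-scalar 2x2 matrix M is of the form a M + b.
   If it is scalar, x^2 = y a^2 makes rho(x) commute with rho(y), so the Klein
   bottle relation x^-1 y x = y^-1 forces rho(y)^2 = 1; by Cayley-Hamilton a
   determinant-one involution is scalar, hence rho(a) = rho(b)^n rho(y)^-1
   commutes with rho(b). *)

Section Matrix22.
Variable R : comNzRingType.
Implicit Types M P Q : 'M[R]_2.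

Lemma mulmx22E P Q i j : (P * Q) i j = P i 0 * Q 0 j + P i 1 * Q 1 j.
Proof.
rewrite -mulmxE mxE !big_ord_recr big_ord0 /= add0r.
have -> : widen_ord (leqnSn 1) ord_max = 0 :> 'I_2 by apply/val_inj.
by have -> : ord_max = 1 :> 'I_2 by apply/val_inj.
Qed.

Lemma matrix22P P Q :
  P 0 0 = Q 0 0 -> P 0 1 = Q 0 1 -> P 1 0 = Q 1 0 -> P 1 1 = Q 1 1 -> P = Q.
Proof.
move=> e00 e01 e10 e11; apply/matrixP => i j.
have ord2 (k : 'I_2) : k = 0 \/ k = 1.
  by case: k => -[|[|//]] ?; [left | right]; apply/val_inj.
by case: (ord2 i) => ->; case: (ord2 j) => ->.
Qed.

Lemma det_mx22 M : \det M = M 0 0 * M 1 1 - M 0 1 * M 1 0.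
Proof.
rewrite (expand_det_row _ 0) !big_ord_recr big_ord0 /= add0r /cofactor !det_mx11 !mxE.
have -> : widen_ord (leqnSn 1) ord_max = 0 :> 'I_2 by apply/val_inj.
have -> : ord_max = 1 :> 'I_2 by apply/val_inj.
have -> : lift 0 0 = 1 :> 'I_2 by apply/val_inj.
have -> : lift 1 0 = 0 :> 'I_2 by apply/val_inj.
by rewrite /= expr0 expr1 mul1r mulN1r mulrN.
Qed.

Lemma trace_mx22 M : \tr M = M 0 0 + M 1 1.
Proof.
rewrite /mxtrace !big_ord_recr big_ord0 /= add0r.
have -> : widen_ord (leqnSn 1) ord_max = 0 :> 'I_2 by apply/val_inj.
by have -> : ord_max = 1 :> 'I_2 by apply/val_inj.
Qed.

Lemma Cayley_Hamilton_mx22 M : M * M = \tr M *: M - (\det M)%:M.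
Proof.
by apply: matrix22P; rewrite !mulmx22E !mxE det_mx22 trace_mx22 /= ?mulr1n ?mulr0n; ring.
Qed.

Lemma is_scalar_mx22 M :
  is_scalar_mx M = [&& M 0 0 == M 1 1, M 0 1 == 0 & M 1 0 == 0].
Proof.
apply/is_scalar_mxP/and3P => [[a ->] | [/eqP e /eqP e01 /eqP e10]].
  by rewrite !mxE /= ?mulr1n ?mulr0n.
by exists (M 0 0); apply: matrix22P; rewrite !mxE /= ?mulr1n ?mulr0n.
Qed.

Lemma comm_mx22 P M : GRing.comm P M ->
  [/\ (P 0 0 - P 1 1) * M 0 1 = P 0 1 * (M 0 0 - M 1 1),
      (P 0 0 - P 1 1) * M 1 0 = P 1 0 * (M 0 0 - M 1 1) &
      P 0 1 * M 1 0 = P 1 0 * M 0 1].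
Proof.
move=> cPM; split; apply: subr0_eq.
- by rewrite -(subrr ((P * M) 0 1)) {2}cPM !mulmx22E; ring.
- by rewrite -(subrr ((P * M) 1 0)) {1}cPM !mulmx22E; ring.
- by rewrite -(subrr ((P * M) 0 0)) {2}cPM !mulmx22E; ring.
Qed.

End Matrix22.

Section Commutant22.
Variable F : fieldType.
Implicit Types (S : seq 'M[F]_2) (M P Q Y g : 'M[F]_2).

Lemma proportional3 (u1 u2 u3 v1 v2 v3 : F) :
  [|| v1 != 0, v2 != 0 | v3 != 0] ->
  u1 * v2 = u2 * v1 -> u1 * v3 = u3 * v1 -> u2 * v3 = u3 * v2 ->
  exists a, [/\ u1 = a * v1, u2 = a * v2 & u3 = a * v3].
Proof.
move=> /or3P[] hv e12 e13 e23.
- by exists (u1 / v1); split; apply: (mulIf hv); rewrite mulrAC divfK.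
- by exists (u2 / v2); split; apply: (mulIf hv); rewrite mulrAC divfK.
- by exists (u3 / v3); split; apply: (mulIf hv); rewrite mulrAC divfK.
Qed.

Lemma commutant_mx22 M P :
  ~~ is_scalar_mx M -> GRing.comm P M -> exists a b, P = a *: M + b%:M.
Proof.
rewrite is_scalar_mx22 -subr_eq0 !negb_and => nsM /comm_mx22[e1 e2 e3].
have [a [d_a P01_a P10_a]] := proportional3 nsM e1 e2 e3.
exists a, (P 1 1 - a * M 1 1).
apply: matrix22P; rewrite !mxE /= ?mulr1n ?mulr0n ?addr0 -?P01_a -?P10_a //.
  by rewrite addrCA -mulrBr -d_a addrC subrK.
by rewrite addrC subrK.
Qed.

Lemma commutant_mx22_comm M P Q :
  ~~ is_scalar_mx M -> GRing.comm P M -> GRing.comm Q M -> GRing.comm P Q.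
Proof.
move=> nsM /(commutant_mx22 nsM)[a [b ->]] cQM.
rewrite -scalemx1 -mulr_algl; apply/commr_sym/commrD.
  by apply: commrM => //; apply/commr_sym/comm_alg.
exact/commr_sym/comm_alg.
Qed.

Lemma involution_mx22_scalar Y :
  2 != 0 :> F -> \det Y = 1 -> Y * Y = 1 -> is_scalar_mx Y.
Proof.
move=> two_neq0 detY YY.
have trY : \tr Y *: Y = 2%:M.
  have := Cayley_Hamilton_mx22 Y; rewrite YY detY => /eqP.
  by rewrite eq_sym subr_eq => /eqP ->; rewrite -[1 in LHS]/(1%:M) -raddfD.
have trY_neq0 : \tr Y != 0.
  apply: contra two_neq0 => /eqP tr0.
  have := congr1 (fun A : 'M[F]_2 => A 0 0) trY.
  by rewrite !mxE tr0 mul0r eqxx mulr1n => <-.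
apply/is_scalar_mxP; exists ((\tr Y)^-1 * 2).
by rewrite -scale_scalar_mx -trY scalerA mulVf ?scale1r.
Qed.

Lemma comm_generated S g :
  (forall s, s \in S -> GRing.comm g s) -> forall h, generated S h -> GRing.comm g h.
Proof.
move=> cgS h; elim=> [|x /cgS //|x _ cgx|x y _ cgx _ cgy].
- exact: commr1.
- exact: commrV.
- exact: commrM.
Qed.

Lemma abelian_imageP S : {in S &, forall s t, GRing.comm s t} -> abelian_image S.
Proof.
move=> cS g h Sg Sh; apply: comm_generated Sh => s Ss.
by apply/commr_sym; apply: comm_generated Sg => t St; apply: cS.
Qed.

Lemma comm_of_nonscalar_square (A B : 'M[F]_2) (m : int) :
  ~~ is_scalar_mx (A ^+ 2) -> A ^+ 2 = B ^ m -> GRing.comm A B.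
Proof.
move=> nsA2 A2B; apply: (commutant_mx22_comm nsA2); first exact/commrX.
by rewrite A2B; apply/commrXz.
Qed.

Lemma comm_of_scalar_square (A B X Y : 'M[F]_2) (k : int) :
  2 != 0 :> F -> B \is a GRing.unit -> X \is a GRing.unit -> \det Y = 1 ->
  is_scalar_mx (A ^+ 2) ->
  X^-1 * Y * X = Y^-1 -> B ^ k * A = Y^-1 -> A ^+ 2 = Y^-1 * X ^+ 2 ->
  GRing.comm A B.
Proof.
move=> two_neq0 uB uX detY /is_scalar_mxP[c A2c] XY BA A2.
have uY : Y \is a GRing.unit by rewrite unitmxE detY unitr1.
have uA2 : A ^+ 2 \is a GRing.unit by rewrite A2 unitrMl ?unitrX // unitrV.
have cXY : GRing.comm X Y.
  have X2 : X ^+ 2 = Y * A ^+ 2 by rewrite A2 mulVKr.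
  have -> : Y = X ^+ 2 * (A ^+ 2)^-1 by rewrite X2 mulrK.
  apply: commrM; first exact/commrX.
  by apply/commrV; rewrite A2c; apply: scalar_mxC.
have YY : Y * Y = 1.
  have Y_inv : Y = Y^-1 by rewrite -XY -mulrA -cXY mulKr.
  by rewrite {2}Y_inv mulrV.
have /is_scalar_mxP[y Yy] := involution_mx22_scalar two_neq0 detY YY.
have -> : A = (B ^ k)^-1 * Y^-1 by rewrite -BA mulKr ?unitrXz.
apply/commr_sym/commrM; first exact/commrV/commrXz.
by apply/commrV; rewrite Yy; apply: scalar_mxC.
Qed.

End Commutant22.

Theorem proposition3p4 (n : int) (hn0 : n != 0) (hn1 : n != -1)
  (A B X Y : 'M[CC]_2) :
  rep_M n A B X Y ->
  irreducible_image [:: A; B; X; Y] ->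
  abelian_image [:: A; B].
Proof.
move=> [[detA detB detX detY] [A2B XY BA A2]] _.
have unit_det1 (M : 'M[CC]_2) : \det M = 1 -> M \is a GRing.unit.
  by move=> detM; rewrite unitmxE detM unitr1.
have cAB : GRing.comm A B.
  have [sA2|nsA2] := boolP (is_scalar_mx (A ^+ 2)).
    apply: (comm_of_scalar_square _ (unit_det1 _ detB) (unit_det1 _ detX) detY sA2 XY BA A2).
    by rewrite pnatr_eq0.
  exact: comm_of_nonscalar_square nsA2 A2B.
apply: abelian_imageP => s t; rewrite !inE => /orP[]/eqP-> /orP[]/eqP-> //.
Qed.
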